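(* Let $K$ be a Kan complex, $v\in K_0$ a vertex and $n\geq1$. Then the homotopy monoid $\tau_n(\mathrm{th}_0(K),v)$ (with the multiplication defined in the context) is a group, and it coincides, as a group, with the simplicial homotopy group $\pi_n(K,v)$.
   Context: A stratified simplicial set is a pair $(X,tX)$ where $X$ is a simplicial set and $tX$ is a set of simplices of $X$ (thin simplices) containing all degenerate simplices and no $0$-simplices; stratified maps are simplicial maps preserving thin simplices. For a Kan complex $K$, $\mathrm{th}_0(K)$ denotes the stratified simplicial set $(K,\bigcup_{m\ge1}K_m)$ (all simplices of positive dimension thin); it is a weak complicial set. For $n\ge1$, $\Delta[n]_t$ is $\Delta[n]$ with thin simplices the degenerate ones and $\mathrm{Id}_{[n]}$. For $k\in[n]$, $\Delta^k[n]$ is $\Delta[n]$ with thin simplices the degenerate ones and all $\alpha:[m]\to[n]$ with $\{k-1,k,k+1\}\cap[n]\subset\mathrm{Im}(\alpha)$. The product $X\circledast Y$ has underlying simplicial set $X\times Y$, with $(x,y)$ thin iff $x$ and $y$ are thin. For stratified maps $f,g:A\to X$ and an inclusion $B\hookrightarrow A$ with $f|_B=g|_B$, $f\sim_B g$ means there is a stratified map $H:A\circledast\Delta[1]_t\to X$ with $H|_{A\times\{0\}}=f$, $H|_{A\times\{1\}}=g$ and $H|_{B\circledast\Delta[1]_t}=f|_B\circ\mathrm{proj}_B$; $n$-simplices are regarded as stratified maps from $\Delta[n]$ with only degenerate simplices thin. For a weak complicial set $X$, vertex $x$, and $n\ge1$, $\tau_n(X,x)$ is the set of $\sim_{\partial\Delta[n]}$-classes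 of $n$-simplices $\alpha$ whose restriction to $\partial\Delta[n]$ is constant at $x$, with multiplication $[\alpha][\beta]=[d_n\theta]$ where $\theta:\Delta^n[n+1]\to X$ is any stratified map with $d_{n-1}\theta=\alpha$, $d_{n+1}\theta=\beta$, and $d_i\theta$ constant at $x$ for $i\notin\{n-1,n,n+1\}$; this is a monoid with unit the class of the constant simplex at $x$. *)

From mathcomp Require Import all_boot.
Set Implicit Arguments. Unset Strict Implicit. Unset Printing Implicit Defensive.

(** * The simplex category Delta: monotone maps [m] -> [n], [m] = 'I_m.+1 *)

Definition monob m n (f : {ffun 'I_m.+1 -> 'I_n.+1}) : bool :=
  [forall i : 'I_m.+1, forall j : 'I_m.+1, (i <= j) ==> (f i <= f j)].

Lemma monoP m n (f : {ffun 'I_m.+1 -> 'I_n.+1}) :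
  reflect (forall i j : 'I_m.+1, i <= j -> f i <= f j) (monob f).
Proof.
apply: (iffP forallP) => [H i j hij | H i].
  by move: (forallP (H i) j) => /implyP; apply.
by apply/forallP => j; apply/implyP; apply: H.
Qed.

Definition Dmap m n := {f : {ffun 'I_m.+1 -> 'I_n.+1} | monob f}.

Definition dapp m n (a : Dmap m n) (i : 'I_m.+1) : 'I_n.+1 := sval a i.

Lemma did_mono n : monob [ffun i : 'I_n.+1 => i].
Proof. by apply/monoP => i j; rewrite !ffunE. Qed.
Definition did n : Dmap n n := exist (fun f => is_true (monob f)) _ (did_mono n).

Lemma dcomp_mono l m n (g : Dmap m n) (f : Dmap l m) :
  monob [ffun i => dapp g (dapp f i)].
Proof.
apply/monoP => i j hij; rewrite !ffunE /dapp.
case: g => g /= /monoP; apply; case: f => f /= /monoP; exact.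
Qed.
Definition dcomp l m n (g : Dmap m n) (f : Dmap l m) : Dmap l n :=
  exist (fun f => is_true (monob f)) _ (dcomp_mono g f).

Lemma dconst_mono m n (j : 'I_n.+1) : monob [ffun _ : 'I_m.+1 => j].
Proof. by apply/monoP => i i' _; rewrite !ffunE. Qed.
Definition dconst m n (j : 'I_n.+1) : Dmap m n := exist (fun f => is_true (monob f)) _ (dconst_mono m j).

Lemma delta_mono n (i : 'I_n.+2) : monob [ffun j : 'I_n.+1 => lift i j].
Proof. by apply/monoP => j j' h; rewrite !ffunE /= leq_bump2. Qed.
Definition delta n (i : 'I_n.+2) : Dmap n n.+1 := exist (fun f => is_true (monob f)) _ (delta_mono i).

Definition dsurj m n (a : Dmap m n) : Prop := forall j, exists i, dapp a i = j.

Lemma Dmap_eq m n (a b : Dmap m n) : (forall i, dapp a i = dapp b i) -> a = b.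
Proof. by move=> H; apply: val_inj; apply/ffunP. Qed.

Record sSet := SSet {
  sx :> nat -> Type;
  sact : forall m n, Dmap m n -> sx n -> sx m;
  sact_id : forall n (x : sx n), sact (did n) x = x;
  sact_comp : forall l m n (g : Dmap m n) (f : Dmap l m) (x : sx n),
      sact (dcomp g f) x = sact f (sact g x) }.

Arguments sact {s m n}.

Definition smap (X Y : sSet) := forall n, X n -> Y n.
Definition natural (X Y : sSet) (f : smap X Y) : Prop :=
  forall m n (b : Dmap m n) (x : X n), f m (sact b x) = sact b (f n x).

Definition face (X : sSet) n (i : nat) (x : X n.+1) : X n :=
  sact (delta (inord i)) x.

Definition cst (X : sSet) (x : X 0) m : X m := sact (dconst m ord0) x.

Definition degenerate (X : sSet) n (x : X n) : Prop :=
  exists m, m < n /\ exists (s : Dmap n m) (y : X m), x = sact s y.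

Lemma Delta_id n m (a : Dmap m n) : dcomp a (did m) = a.
Proof. by apply: Dmap_eq => i; rewrite /dapp /= !ffunE /dapp /= ?ffunE. Qed.
Lemma Delta_comp n l m k (g : Dmap m k) (f : Dmap l m) (a : Dmap k n) :
  dcomp a (dcomp g f) = dcomp (dcomp a g) f.
Proof. by apply: Dmap_eq => i; rewrite /dapp /= !ffunE /dapp /= ?ffunE. Qed.
Definition Delta (n : nat) : sSet :=
  @SSet (fun m => Dmap m n) (fun m k b a => dcomp a b)
        (fun k a => Delta_id a) (fun l m k g f a => Delta_comp g f a).

Section Prod.
Variables X Y : sSet.
Definition prod_act m n (b : Dmap m n) (p : (X n * Y n)%type) : (X m * Y m)%type :=
  (sact b p.1, sact b p.2).
Lemma prod_id n (p : (X n * Y n)%type) : prod_act (did n) p = p.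
Proof. by case: p => x y; rewrite /prod_act /= !sact_id. Qed.
Lemma prod_comp l m n (g : Dmap m n) (f : Dmap l m) (p : (X n * Y n)%type) :
  prod_act (dcomp g f) p = prod_act f (prod_act g p).
Proof. by case: p => x y; rewrite /prod_act /= !sact_comp. Qed.
Definition prodS : sSet :=
  @SSet (fun n => (X n * Y n)%type) prod_act prod_id prod_comp.
End Prod.

(** The horn Lambda^k[n] is the sub-simplicial set of Delta[n] consisting of
    the a : [m] -> [n] whose image misses some j <> k. *)
Definition in_horn n (k : 'I_n.+1) m (a : Dmap m n) : Prop :=
  exists j : 'I_n.+1, j != k /\ forall i, dapp a i != j.

Definition Kan (K : sSet) : Prop :=
  forall n (k : 'I_n.+2) (f : forall m, Dmap m n.+1 -> K m),
    (forall m l (b : Dmap l m) (a : Dmap m n.+1),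
        in_horn k a -> f l (dcomp a b) = sact b (f m a)) ->
    exists x : K n.+1, forall m (a : Dmap m n.+1), in_horn k a -> sact a x = f m a.

Record strat := Strat { ssset :> sSet; thin : forall n, ssset n -> Prop }.
Arguments thin {s n}.

Definition strat_map (A X : strat) (f : smap A X) : Prop :=
  natural f /\ forall m (a : A m), thin a -> thin (f m a).

Definition Deltas n : strat := @Strat (Delta n) (fun m (a : Dmap m n) => degenerate (X := Delta n) a).

(** Delta[n]_t : degenerate simplices and the identity of [n] are thin *)
Definition DeltaT n : strat :=
  @Strat (Delta n) (fun m (a : Dmap m n) =>
     degenerate (X := Delta n) a \/ (m = n /\ forall i : 'I_m.+1, val (dapp a i) = val i)).

Definition DeltaH n (k : nat) : strat :=
  @Strat (Delta n) (fun m (a : Dmap m n) =>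
     degenerate (X := Delta n) a \/
     forall j : 'I_n.+1, k.-1 <= j <= k.+1 -> exists i, dapp a i = j).

Definition sprod (A B : strat) : strat :=
  @Strat (prodS A B) (fun m p => thin p.1 /\ thin p.2).

Definition th0 (K : sSet) : strat := @Strat K (fun m _ => 0 < m).

Definition yon (X : sSet) n (x : X n) : smap (Delta n) X := fun m b => sact b x.

Definition rel_htpy (A X : strat) (B : forall m, A m -> Prop) (f g : smap A X) : Prop :=
  (forall m (a : A m), B m a -> f m a = g m a) /\
  exists H : smap (sprod A (DeltaT 1)) X,
    strat_map (A := sprod A (DeltaT 1)) (X := X) H /\
    (forall m (a : A m), H m (a, dconst m (@ord0 1)) = f m a) /\
    (forall m (a : A m), H m (a, dconst m (@ord_max 1)) = g m a) /\
    (forall m (a : A m) (t : Dmap m 1), B m a -> H m (a, t) = f m a).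

Definition boundary n : forall m, Deltas n m -> Prop := fun m (a : Dmap m n) => ~ dsurj a.

(** * The homotopy monoid tau_N(X, x), here for N = n+1 >= 1 *)

Definition tau_sph (X : strat) (x : X 0) n (a : X n.+1) : Prop :=
  forall m (b : Dmap m n.+1), boundary b -> sact b a = cst x m.

Definition tau_eq (X : strat) (x : X 0) n (a b : X n.+1) : Prop :=
  tau_sph x a /\ tau_sph x b /\
  rel_htpy (A := Deltas n.+1) (X := X) (@boundary n.+1) (yon a) (yon b).

(** tau_mul a b c : [a][b] = [c] *)
Definition tau_mul (X : strat) (x : X 0) n (a b c : X n.+1) : Prop :=
  tau_sph x a /\ tau_sph x b /\ tau_sph x c /\
  exists z : X n.+2,
    strat_map (A := DeltaH n.+2 n.+1) (X := X) (yon z) /\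
    face n z = a /\ face n.+2 z = b /\
    (forall i, i <= n.+2 -> i \notin [:: n; n.+1; n.+2] -> face i z = cst x n.+1) /\
    tau_eq x (face n.+1 z) c.

(** * The simplicial homotopy group pi_N(K, v) (May's combinatorial
      definition), for N = n+1 >= 1 *)

Definition pi_sph (K : sSet) (v : K 0) n (a : K n.+1) : Prop :=
  forall i, i <= n.+1 -> face i a = cst v n.

Definition pi_eq (K : sSet) (v : K 0) n (a b : K n.+1) : Prop :=
  pi_sph v a /\ pi_sph v b /\
  exists y : K n.+2, face n.+1 y = a /\ face n.+2 y = b /\
    forall i, i < n.+1 -> face i y = cst v n.+1.

Definition pi_mul (K : sSet) (v : K 0) n (a b c : K n.+1) : Prop :=
  pi_sph v a /\ pi_sph v b /\ pi_sph v c /\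
  exists z : K n.+2, face n z = a /\ face n.+2 z = b /\
    (forall i, i < n -> face i z = cst v n.+1) /\
    pi_eq v (face n.+1 z) c.

(** * Groups presented as a carrier S, an equivalence E on S and a
      multiplication relation M (M a b c  <->  [a][b] = [c]) on classes *)
Definition is_group_setoid (T : Type) (S : T -> Prop) (E : T -> T -> Prop)
    (M : T -> T -> T -> Prop) (e : T) : Prop :=
  ((forall a, S a -> E a a) /\ (forall a b, E a b -> E b a) /\
      (forall a b c, E a b -> E b c -> E a c) /\ (forall a b, E a b -> S a /\ S b)) /\
      S e /\
      (forall a b, S a -> S b -> exists c, M a b c) /\
      (forall a b c, M a b c -> [/\ S a, S b & S c]) /\
      (forall a b c a' b' c', M a b c -> E a a' -> E b b' -> E c c' -> M a' b' c') /\
      (forall a b c c', M a b c -> M a b c' -> E c c') /\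
      (forall a b c ab bc abc, M a b ab -> M ab c abc -> M b c bc -> M a bc abc) /\
      (forall a, S a -> M e a a /\ M a e a) /\
      (forall a, S a -> exists b, [/\ S b, M a b e & M b a e]).

From mathcomp Require Import all_boot zify.
From Stdlib Require Import FunctionalExtensionality PropExtensionality.
Set Implicit Arguments. Unset Strict Implicit. Unset Printing Implicit Defensive.

(* In th_0(K) every simplex of positive dimension is thin, so the thinness
   conditions in the definition of tau_n are automatic and only the combinatorics
   of faces remains.  A simplex is constant on the boundary iff all its faces are,
   because a non-surjective simplex factors through a face.  A homotopy rel
   boundary Delta[n] (x) Delta[1]_t -> K restricts to the (n+1)-simplices of the
   standard triangulation of the prism, giving a chain of May homotopies between
   consecutive slices; conversely a May homotopy y gives a prism by pulling y back
   along the collapse Delta[n] x Delta[1] -> Delta[n+1].  So tau_n and pi_n have the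
   same spheres, relation and multiplication, and pi_n(K, v) is a group by May's
   horn-filling arguments in the Kan complex K. *)

Lemma inordE n i : nat_of_ord (@inord n i) = if i < n.+1 then i else 0.
Proof. by rewrite /inord /insubd; case: insubP => [u -> ->|/negbTE ->]. Qed.

Lemma bumpE h i : bump h i = if h <= i then i.+1 else i.
Proof. by rewrite /bump; case: leqP. Qed.

Lemma unbumpE h i : unbump h i = if h < i then i.-1 else i.
Proof. by rewrite /unbump; case: ltnP => _; rewrite ?subn1 ?subn0. Qed.

Ltac nat_cases := repeat (case: ifP => /=; rewrite ?inordE /=); lia.

Lemma dapp_comp l m n (g : Dmap m n) (f : Dmap l m) i :
  dapp (dcomp g f) i = dapp g (dapp f i).
Proof. by rewrite /dapp /= ffunE. Qed.

Lemma dapp_did n k : dapp (did n) k = k.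
Proof. by rewrite /dapp /= ffunE. Qed.

Lemma dapp_dconst m n (j : 'I_n.+1) k : dapp (dconst m j) k = j.
Proof. by rewrite /dapp /= ffunE. Qed.

Lemma dapp_delta n (i : 'I_n.+2) k : nat_of_ord (dapp (delta i) k) = bump i k.
Proof. by rewrite /dapp /= ffunE. Qed.

Lemma dapp_mono m n (a : Dmap m n) (i j : 'I_m.+1) : i <= j -> dapp a i <= dapp a j.
Proof. by rewrite /dapp; case: a => f /= /monoP; apply. Qed.

Lemma sigma_mono n i :
  monob [ffun k : 'I_n.+2 => (inord (if (k <= i) && (k <= n) then k : nat else k.-1) : 'I_n.+1)].
Proof.
by apply/monoP => k k' hk; rewrite !ffunE !inordE; move: hk; have := ltn_ord k'; nat_cases.
Qed.
Definition sigma n i : Dmap n.+1 n := exist (fun f => monob f) _ (sigma_mono n i).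

Lemma dapp_sigma n i k :
  nat_of_ord (dapp (sigma n i) k) = if (k <= i) && (k <= n) then k : nat else k.-1.
Proof. by rewrite /dapp /= ffunE inordE; have := ltn_ord k; nat_cases. Qed.

Lemma dunlift_mono m n j (a : Dmap m n.+1) :
  monob [ffun k : 'I_m.+1 => (inord (minn (unbump j (dapp a k)) n) : 'I_n.+1)].
Proof.
apply/monoP => k k' hk; rewrite !ffunE !inordE !unbumpE.
have := dapp_mono a hk; have := ltn_ord (dapp a k'); nat_cases.
Qed.
(* The factor of [a] through [delta j] when [a] avoids [j]; the [minn] only serves
   to keep the map monotone in the other cases. *)
Definition dunlift m n j (a : Dmap m n.+1) : Dmap m n :=
  exist (fun f => monob f) _ (dunlift_mono j a).

Lemma dapp_dunlift m n j (a : Dmap m n.+1) k :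
  nat_of_ord (dapp (dunlift j a) k) = minn (unbump j (dapp a k)) n.
Proof. by rewrite /dapp /= ffunE inordE; case: ifP => //; lia. Qed.

Lemma dstep_mono m i : monob [ffun k : 'I_m.+1 => (inord (if k < i then 0 else 1) : 'I_2)].
Proof. by apply/monoP => k k' hk; rewrite !ffunE !inordE; move: hk; nat_cases. Qed.
Definition dstep m i : Dmap m 1 := exist (fun f => monob f) _ (dstep_mono m i).

Lemma dapp_dstep m i k : nat_of_ord (dapp (dstep m i) k) = if k < i then 0 else 1.
Proof. by rewrite /dapp /= ffunE inordE; nat_cases. Qed.

Lemma collapse_mono m n (c : Dmap m n.+1) (t : Dmap m 1) :
  monob [ffun k : 'I_m.+1 =>
    (inord (if (nat_of_ord (dapp c k) == n.+1) && (nat_of_ord (dapp t k) == 1)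
            then n.+2 else dapp c k) : 'I_n.+3)].
Proof.
apply/monoP => k k' hk; rewrite !ffunE !inordE.
have := dapp_mono c hk; have := dapp_mono t hk.
have := ltn_ord (dapp c k'); have := ltn_ord (dapp t k'); nat_cases.
Qed.
(* The simplicial map Delta[n+1] x Delta[1] -> Delta[n+2] sending the vertex (j, s)
   to j, except (n+1, 1) |-> n+2. *)
Definition collapse m n (c : Dmap m n.+1) (t : Dmap m 1) : Dmap m n.+2 :=
  exist (fun f => monob f) _ (collapse_mono c t).

Lemma dapp_collapse m n (c : Dmap m n.+1) (t : Dmap m 1) k :
  nat_of_ord (dapp (collapse c t) k) =
  if (nat_of_ord (dapp c k) == n.+1) && (nat_of_ord (dapp t k) == 1) then n.+2 else dapp c k.
Proof. by rewrite {1}/dapp /= ffunE inordE; have := ltn_ord (dapp c k); nat_cases. Qed.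

Ltac dmap_ext := apply: Dmap_eq => k; apply: ord_inj;
  rewrite ?(dapp_comp, dapp_did, dapp_dconst, dapp_sigma, dapp_dstep, dapp_collapse, dapp_delta,
            bumpE, inordE) /=.

Ltac dmap_cases := dmap_ext; have := ltn_ord k; nat_cases.

Lemma delta_delta n i j : i < j -> j <= n.+2 ->
  dcomp (delta (n := n.+1) (inord j)) (delta (n := n) (inord i)) =
  dcomp (delta (inord i)) (delta (inord j.-1)).
Proof. by move=> hij hj; dmap_cases. Qed.

Definition avoids m n (a : Dmap m n) j := forall k, nat_of_ord (dapp a k) != j.

Lemma delta_inj m n (j : 'I_n.+2) (b b' : Dmap m n) :
  dcomp (delta j) b = dcomp (delta j) b' -> b = b'.
Proof.
move=> e; apply: Dmap_eq => k; move/(congr1 (fun c => dapp c k)): e.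
rewrite !dapp_comp => /(congr1 (@nat_of_ord _)).
by rewrite !dapp_delta => /(can_inj (bumpK j))/ord_inj.
Qed.

Lemma delta_dunlift m n j (a : Dmap m n.+1) :
  j <= n.+1 -> avoids a j -> dcomp (delta (inord j)) (dunlift j a) = a.
Proof.
move=> hj ha; dmap_ext; rewrite dapp_dunlift unbumpE.
by have := ha k; have := ltn_ord (dapp a k); nat_cases.
Qed.

Lemma dunlift_delta m n j (b : Dmap m n) :
  j <= n.+1 -> dunlift j (dcomp (delta (inord j)) b) = b.
Proof.
move=> hj; apply: (@delta_inj _ _ (inord j)); rewrite delta_dunlift // => k.
by rewrite dapp_comp dapp_delta bumpE inordE; nat_cases.
Qed.

Lemma dunlift_comp l m n j (a : Dmap m n.+1) (b : Dmap l m) :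
  dunlift j (dcomp a b) = dcomp (dunlift j a) b.
Proof. by dmap_ext; rewrite !dapp_dunlift dapp_comp. Qed.

Lemma dunlift_avoids m n j1 j2 (a : Dmap m n.+2) :
  j1 < j2 -> j2 <= n.+2 -> avoids a j1 -> avoids a j2 -> avoids (dunlift j2 a) j1.
Proof.
move=> hj hj2 h1 h2 k; rewrite dapp_dunlift unbumpE.
by have := h1 k; have := h2 k; have := ltn_ord (dapp a k); nat_cases.
Qed.

Lemma delta_avoids n i : i <= n.+1 -> avoids (delta (n := n) (inord i)) i.
Proof. by move=> hi k; rewrite dapp_delta bumpE inordE; have := ltn_ord k; nat_cases. Qed.

Definition degen (X : sSet) n i (x : X n) : X n.+1 := sact (sigma n i) x.

Section SimplicialIdentities.
Variable X : sSet.

Lemma face_face n i j (y : X n.+2) :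
  i < j -> j <= n.+2 -> face i (face j y) = face j.-1 (face i y).
Proof. by move=> hij hj; rewrite /face -!sact_comp delta_delta. Qed.

Lemma face_faceE n k l (y : X n.+2) : l <= n.+1 -> k <= n.+2 ->
  face l (face k y) = if l < k then face k.-1 (face l y) else face k (face l.+1 y).
Proof.
move=> hl hk; case: ifP => h; first by rewrite face_face.
by rewrite [RHS]face_face //; lia.
Qed.

Lemma face_degen_lt n (x : X n.+1) i l :
  l < i -> i <= n.+1 -> face l (degen i x) = degen i.-1 (face l x).
Proof.
by move=> hl hi; rewrite /face /degen -!sact_comp; congr sact; dmap_cases.
Qed.

Lemma face_degen_eq n (x : X n.+1) i l :
  (l == i) || (l == i.+1) -> i <= n.+1 -> face l (degen i x) = x.
Proof.
move=> hl hi; rewrite /face /degen -!sact_comp -[RHS]sact_id; congr sact; dmap_ext.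
by move: hl; have := ltn_ord k; nat_cases.
Qed.

Lemma face_degen_gt n (x : X n.+1) i l :
  i.+1 < l -> l <= n.+2 -> face l (degen i x) = degen i (face l.-1 x).
Proof.
by move=> hl hi; rewrite /face /degen -!sact_comp; congr sact; dmap_cases.
Qed.

Lemma sact_cst (x : X 0) m p (b : Dmap p m) : sact b (cst x m) = cst x p.
Proof. by rewrite /cst -sact_comp; congr sact; dmap_ext. Qed.

Lemma face_cst (x : X 0) m i : face i (cst x m.+1) = cst x m.
Proof. exact: sact_cst. Qed.

Lemma degen_cst (x : X 0) m i : degen i (cst x m) = cst x m.+1.
Proof. exact: sact_cst. Qed.

Lemma face_if n l (b : bool) (x y : X n.+1) :
  face l (if b then x else y) = if b then face l x else face l y.
Proof. by case: b. Qed.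

Lemma sact_avoids n m (x : X n.+1) (b : Dmap m n.+1) j :
  j <= n.+1 -> avoids b j -> sact b x = sact (dunlift j b) (face j x).
Proof. by move=> hj hb; rewrite /face -sact_comp delta_dunlift. Qed.

End SimplicialIdentities.

Section KanFiller.
Variable K : sSet.
Hypothesis hK : Kan K.

Definition horn_compatible p h (x : nat -> K p.+1) :=
  forall i j, i < j -> j <= p.+2 -> i != h -> j != h -> face i (x j) = face j.-1 (x i).

Lemma horn_value_indep p h (x : nat -> K p.+1) m (a : Dmap m p.+2) j1 j2 :
  horn_compatible h x -> j1 <= p.+2 -> j2 <= p.+2 -> j1 != h -> j2 != h ->
  avoids a j1 -> avoids a j2 -> sact (dunlift j1 a) (x j1) = sact (dunlift j2 a) (x j2).
Proof.
move=> hx; wlog hj : j1 j2 / j1 < j2 => [hwlog hj1 hj2 h1 h2 a1 a2|_ hj2 h1 h2 a1 a2].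
  case: (ltngtP j1 j2) => [hj|hj|->] //; first exact: hwlog.
  exact/esym/hwlog.
(* [a] factors through [delta j2 \o delta j1 = delta j1 \o delta j2.-1], so both
   sides pull back the common face [face j1 (x j2) = face j2.-1 (x j1)]. *)
set c := dunlift j1 (dunlift j2 a).
have e2 : dunlift j2 a = dcomp (delta (inord j1)) c.
  by rewrite /c delta_dunlift //; [lia | exact: dunlift_avoids].
have e1 : dunlift j1 a = dcomp (delta (inord j2.-1)) c.
  apply: (@delta_inj _ _ (inord j1)); rewrite delta_dunlift //; last lia.
  by rewrite Delta_comp -delta_delta // -Delta_comp -e2 delta_dunlift.
by rewrite e1 e2 !sact_comp; congr sact; apply/esym/hx.
Qed.

Lemma in_hornP n h m (a : Dmap m n.+1) : h <= n.+1 ->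
  in_horn (inord h) a <-> exists j, [/\ j <= n.+1, j != h & avoids a j].
Proof.
move=> hh; split => [[j [jh ja]]|[j [hj jh ja]]].
  exists j; split; first by have := ltn_ord j.
    by apply: contra jh => /eqP e; apply/eqP/ord_inj; rewrite e inordE ifT.
  by move=> k; apply: contra (ja k) => /eqP e; apply/eqP/ord_inj.
exists (inord j); split.
  by apply: contra jh => /eqP/(congr1 (@nat_of_ord _)); rewrite !inordE !ifT // => ->.
by move=> k; apply: contra (ja k) => /eqP ->; rewrite inordE ifT.
Qed.

Lemma kan_face_filler p h (x : nat -> K p.+1) : h <= p.+2 -> horn_compatible h x ->
  exists y : K p.+2, forall i, i <= p.+2 -> i != h -> face i y = x i.
Proof.
move=> hh hx.
(* On the horn, [a] avoids some vertex [j != h] and is sent to the pullback of [x j]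
   along [dunlift j a], independently of [j]; off the horn the value is arbitrary. *)
pose f m (a : Dmap m p.+2) : K m :=
  if [pick j : 'I_p.+3 | (val j != h) && [forall k, dapp a k != j]] is Some j
  then sact (dunlift j a) (x j) else sact (dconst m ord0) (x 0).
have fE m a j : j <= p.+2 -> j != h -> avoids a j -> f m a = sact (dunlift j a) (x j).
  move=> hj jh ja; rewrite /f; case: pickP => [j0 /andP [h0 /forallP h1]|none].
    by apply: (horn_value_indep hx) => //; have := ltn_ord j0.
  have /negbT := none (inord j); rewrite /= inordE ifT // jh /= => /forallPn [k].
  rewrite negbK => /eqP/(congr1 (@nat_of_ord _)); rewrite inordE ifT // => e.
  by have := ja k; rewrite e eqxx.
have [y hy] : exists y : K p.+2, forall m a, in_horn (inord h) a -> sact a y = f m a.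
  apply: hK => m l b a /(in_hornP _ hh) [j [hj jh ja]].
  rewrite (fE _ _ j) // ?(fE _ _ j) // ?dunlift_comp ?sact_comp // => k.
  by rewrite dapp_comp.
exists y => i hi ih.
rewrite /face hy; last by apply/in_hornP => //; exists i; split => //; apply: delta_avoids.
rewrite (fE _ _ i) //; last exact: delta_avoids.
rewrite -[RHS]sact_id; congr sact.
by rewrite -{1}(Delta_id (delta (inord i))) dunlift_delta.
Qed.

Lemma kan_horn p h (x : nat -> K p.+1) : h <= p.+2 -> horn_compatible h x ->
  exists y : K p.+2, (forall i, i <= p.+2 -> i != h -> face i y = x i) /\
    forall l, l <= p.+1 ->
      face l (face h y) = if l < h then face h.-1 (x l) else face h (x l.+1).
Proof.
move=> hh hx; have [y hy] := kan_face_filler hh hx; exists y; split => // l hl.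
by rewrite face_faceE //; case: ifP => hlh; rewrite hy //; lia.
Qed.

End KanFiller.

Ltac split_ifs := repeat (case: ifP => ?); try reflexivity; try lia; exfalso; lia.

Ltac face_calc := rewrite /= ?face_if ?face_cst ?degen_cst.

Section HomotopyGroup.
Variables (K : sSet) (v : K 0).
Hypothesis hK : Kan K.

Lemma face_degen_sph n (x : K n.+1) i l : pi_sph v x -> i <= n.+1 -> l <= n.+2 ->
  face l (degen i x) = if (l == i) || (l == i.+1) then x else cst v n.+1.
Proof.
move=> hx hi hl; have [h|h] := ltnP l i.
  by rewrite face_degen_lt // hx ?degen_cst; split_ifs.
have [h'|h'] := ltnP i.+1 l.
  by rewrite face_degen_gt // hx ?degen_cst; split_ifs.
by rewrite face_degen_eq //; split_ifs.
Qed.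

Definition htpy n i (x x' : K n.+1) := exists y : K n.+2, forall l, l <= n.+2 ->
  face l y = if l == i then x else if l == i.+1 then x' else cst v n.+1.

Definition composite n (a b c : K n.+1) := exists z : K n.+2, forall l, l <= n.+2 ->
  face l z = if l == n then a else if l == n.+1 then c else if l == n.+2 then b
             else cst v n.+1.

Lemma htpy_up n i (x x' : K n.+1) : pi_sph v x' -> i <= n -> htpy i x x' -> htpy i.+1 x x'.
Proof.
move=> hx' hi [y hy].
pose xs j := if j == i.+1 then degen i.+1 x' else if j == i.+2 then y
             else if j == i.+3 then degen i x' else cst v n.+2.
have hxs : horn_compatible i xs.
  by move=> a b *; rewrite /xs; face_calc; rewrite ?face_degen_sph ?hy //; split_ifs.
have [|w [_ hw]] := kan_horn hK _ hxs; first lia.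
exists (face i w) => l hl; rewrite hw; last lia.
by case: ifP => ?; rewrite /xs; face_calc; rewrite ?face_degen_sph ?hy //; split_ifs.
Qed.

Lemma htpy_down n i (x x' : K n.+1) : pi_sph v x -> i <= n -> htpy i.+1 x x' -> htpy i x x'.
Proof.
move=> hx hi [y hy].
pose xs j := if j == i then degen i.+1 x else if j == i.+1 then y
             else if j == i.+2 then degen i x else cst v n.+2.
have hxs : horn_compatible i.+3 xs.
  by move=> a b *; rewrite /xs; face_calc; rewrite ?face_degen_sph ?hy //; split_ifs.
have [|w [_ hw]] := kan_horn hK _ hxs; first lia.
exists (face i.+3 w) => l hl; rewrite hw; last lia.
by case: ifP => ?; rewrite /xs; face_calc; rewrite ?face_degen_sph ?hy //; split_ifs.
Qed.

Lemma htpy_top n i (x x' : K n.+1) : pi_sph v x' -> i <= n.+1 -> htpy i x x' -> htpy n.+1 x x'.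
Proof.
move=> hx' hi; have [d hd] : exists d, i + d = n.+1 by exists (n.+1 - i); lia.
elim: d i hd {hi} => [|d IH] i hd h; first by rewrite -hd addn0.
by apply: (IH i.+1); [lia | apply: htpy_up => //; lia].
Qed.

Lemma htpy_refl n (x : K n.+1) : pi_sph v x -> htpy n.+1 x x.
Proof. by move=> hx; exists (degen n.+1 x) => l hl; rewrite face_degen_sph //; split_ifs. Qed.

Lemma htpy_euclid n (x x' x'' : K n.+1) : htpy n.+1 x x' -> htpy n.+1 x x'' -> htpy n.+1 x' x''.
Proof.
move=> [y1 hy1] [y2 hy2].
pose xs j := if j == n.+1 then y1 else if j == n.+2 then y2 else cst v n.+2.
have hxs : horn_compatible n.+3 xs.
  by move=> a b *; rewrite /xs; face_calc; rewrite ?hy1 ?hy2 //; split_ifs.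
have [|w [_ hw]] := kan_horn hK _ hxs; first lia.
exists (face n.+3 w) => l hl; rewrite hw; last lia.
by case: ifP => ?; rewrite /xs; face_calc; rewrite ?hy1 ?hy2 //; split_ifs.
Qed.

Lemma composite_exists n (a b : K n.+1) :
  pi_sph v a -> pi_sph v b -> exists c, composite a b c.
Proof.
move=> ha hb.
pose xs j := if j == n then a else if j == n.+2 then b else cst v n.+1.
have hxs : horn_compatible n.+1 xs.
  by move=> i j *; rewrite /xs; face_calc; rewrite ?ha ?hb //; split_ifs.
have [|w [hw _]] := kan_horn hK _ hxs; first lia.
exists (face n.+1 w), w => l hl; have [->|hl'] := eqVneq l n.+1; first by split_ifs.
by rewrite hw // /xs; split_ifs.
Qed.

Lemma composite_sph n (a b c : K n.+1) :
  pi_sph v a -> pi_sph v b -> composite a b c -> pi_sph v c.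
Proof.
move=> ha hb [z hz] l hl.
have -> : c = face n.+1 z by rewrite hz //; split_ifs.
rewrite face_faceE //; case: ifP => ?; rewrite hz; try lia.
  by face_calc; rewrite ?ha //; split_ifs.
by face_calc; rewrite ?hb //; split_ifs.
Qed.

Lemma composite_htpy_l n (a a' b c c' : K n.+1) :
  composite a b c -> composite a' b c' -> htpy n.+1 a a' -> htpy n.+1 c c'.
Proof.
move=> [z hz] [z' hz'] [y hy].
pose xs j := if j == n then y else if j == n.+2 then z else if j == n.+3 then z'
             else cst v n.+2.
have hxs : horn_compatible n.+1 xs.
  by move=> i j *; rewrite /xs; face_calc; rewrite ?hy ?hz ?hz' //; split_ifs.
have [|w [_ hw]] := kan_horn hK _ hxs; first lia.
exists (face n.+1 w) => l hl; rewrite hw; last lia.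
by case: ifP => ?; rewrite /xs; face_calc; rewrite ?hy ?hz ?hz' //; split_ifs.
Qed.

Lemma composite_htpy_r n (a b b' c c' : K n.+1) :
  composite a b c -> composite a b' c' -> htpy n b b' -> htpy n c c'.
Proof.
move=> [z hz] [z' hz'] [y hy].
pose xs j := if j == n then z else if j == n.+1 then z' else if j == n.+3 then y
             else cst v n.+2.
have hxs : horn_compatible n.+2 xs.
  by move=> i j *; rewrite /xs; face_calc; rewrite ?hy ?hz ?hz' //; split_ifs.
have [|w [_ hw]] := kan_horn hK _ hxs; first lia.
exists (face n.+2 w) => l hl; rewrite hw; last lia.
by case: ifP => ?; rewrite /xs; face_calc; rewrite ?hy ?hz ?hz' //; split_ifs.
Qed.

Lemma composite_assoc n (a b c ab bc abc : K n.+1) :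
  composite a b ab -> composite ab c abc -> composite b c bc -> composite a bc abc.
Proof.
move=> [z1 h1] [z2 h2] [z3 h3].
pose xs j := if j == n then z1 else if j == n.+2 then z2 else if j == n.+3 then z3
             else cst v n.+2.
have hxs : horn_compatible n.+1 xs.
  by move=> i j *; rewrite /xs; face_calc; rewrite ?h1 ?h2 ?h3 //; split_ifs.
have [|w [_ hw]] := kan_horn hK _ hxs; first lia.
exists (face n.+1 w) => l hl; rewrite hw; last lia.
by case: ifP => ?; rewrite /xs; face_calc; rewrite ?h1 ?h2 ?h3 //; split_ifs.
Qed.

Lemma composite_1l n (a : K n.+1) : pi_sph v a -> composite (cst v n.+1) a a.
Proof. by move=> ha; exists (degen n.+1 a) => l hl; rewrite face_degen_sph //; split_ifs. Qed.

Lemma composite_1r n (a : K n.+1) : pi_sph v a -> composite a (cst v n.+1) a.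
Proof. by move=> ha; exists (degen n a) => l hl; rewrite face_degen_sph //; split_ifs. Qed.

Lemma composite_invr n (a : K n.+1) :
  pi_sph v a -> exists2 b, pi_sph v b & composite a b (cst v n.+1).
Proof.
move=> ha; pose xs j := if j == n then a else cst v n.+1.
have hxs : horn_compatible n.+2 xs.
  by move=> i j *; rewrite /xs; face_calc; rewrite ?ha //; split_ifs.
have [|w [hw hwf]] := kan_horn hK _ hxs; first lia.
exists (face n.+2 w).
  move=> l hl; rewrite hwf //.
  by case: ifP => ?; rewrite /xs; face_calc; rewrite ?ha //; split_ifs.
exists w => l hl; have [->|hl'] := eqVneq l n.+2; first by split_ifs.
by rewrite hw // /xs; split_ifs.
Qed.

Lemma composite_invl n (a : K n.+1) :
  pi_sph v a -> exists2 b, pi_sph v b & composite b a (cst v n.+1).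
Proof.
move=> ha; pose xs j := if j == n.+2 then a else cst v n.+1.
have hxs : horn_compatible n xs.
  by move=> i j *; rewrite /xs; face_calc; rewrite ?ha //; split_ifs.
have [|w [hw hwf]] := kan_horn hK _ hxs; first lia.
exists (face n w).
  move=> l hl; rewrite hwf //.
  by case: ifP => ?; rewrite /xs; face_calc; rewrite ?ha //; split_ifs.
exists w => l hl; have [->|hl'] := eqVneq l n; first by split_ifs.
by rewrite hw // /xs; split_ifs.
Qed.

Lemma pi_eqE n (a b : K n.+1) :
  pi_eq v a b <-> [/\ pi_sph v a, pi_sph v b & htpy n.+1 a b].
Proof.
split=> [[ha [hb [y [y1 [y2 y3]]]]] | [ha hb [y hy]]].
  split=> //; exists y => l hl.
  by case: ifP => [/eqP -> //|/negbT ?]; case: ifP => [/eqP -> //|/negbT ?]; apply: y3; lia.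
split=> //; split=> //; exists y.
by rewrite !hy //; split; [|split=> [|i hi]; rewrite ?hy]; split_ifs.
Qed.

Lemma pi_eq_refl n (a : K n.+1) : pi_sph v a -> pi_eq v a a.
Proof. by move=> ha; apply/pi_eqE; split=> //; apply: htpy_refl. Qed.

Lemma pi_eq_sym n (a b : K n.+1) : pi_eq v a b -> pi_eq v b a.
Proof.
move/pi_eqE=> [ha hb h]; apply/pi_eqE; split=> //.
exact: htpy_euclid h (htpy_refl ha).
Qed.

Lemma pi_eq_trans n (a b c : K n.+1) : pi_eq v a b -> pi_eq v b c -> pi_eq v a c.
Proof.
move=> /pi_eq_sym/pi_eqE [hb ha hba] /pi_eqE [_ hc hbc]; apply/pi_eqE; split=> //.
exact: htpy_euclid hba hbc.
Qed.

Lemma pi_eq_composite_l n (a a' b c c' : K n.+1) : pi_sph v b ->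
  composite a b c -> composite a' b c' -> pi_eq v a a' -> pi_eq v c c'.
Proof.
move=> hb t t' /pi_eqE [ha ha' h]; apply/pi_eqE.
split; [exact: composite_sph t | exact: composite_sph t' | exact: composite_htpy_l t t' h].
Qed.

Lemma pi_eq_composite_r n (a b b' c c' : K n.+1) : pi_sph v a ->
  composite a b c -> composite a b' c' -> pi_eq v b b' -> pi_eq v c c'.
Proof.
move=> ha t t' /pi_eqE [hb hb' h].
have hc' := composite_sph ha hb' t'.
apply/pi_eqE; split=> //; first exact: composite_sph t.
by apply: htpy_up => //; apply: composite_htpy_r t t' (htpy_down hb _ h).
Qed.

Lemma pi_mulE n (a b c : K n.+1) : pi_mul v a b c <->
  [/\ pi_sph v a, pi_sph v b & exists2 c0, composite a b c0 & pi_eq v c0 c].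
Proof.
split=> [[ha [hb [hc [z [z1 [z2 [z3 z4]]]]]]] | [ha hb [c0 [z hz] e]]].
  split=> //; exists (face n.+1 z) => //; exists z => l hl.
  case: ifP => [/eqP -> //|/negbT ?]; case: ifP => [/eqP -> //|/negbT ?].
  by case: ifP => [/eqP -> //|/negbT ?]; apply: z3; lia.
have /pi_eqE [_ hc _] := e.
split=> //; split=> //; split=> //; exists z.
split; first by rewrite hz //; split_ifs.
split; first by rewrite hz //; split_ifs.
split; first by move=> i hi; rewrite hz; split_ifs.
by have -> : face n.+1 z = c0 by rewrite hz //; split_ifs.
Qed.

Lemma pi_sph_cst n : pi_sph v (cst v n.+1).
Proof. by move=> i _; rewrite face_cst. Qed.

Lemma pi_mul_composite n (a b c c' : K n.+1) :
  pi_sph v a -> pi_sph v b -> composite a b c -> pi_eq v c c' -> pi_mul v a b c'.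
Proof. by move=> ha hb t e; apply/pi_mulE; split=> //; exists c. Qed.

Lemma pi_mul_exists n (a b : K n.+1) :
  pi_sph v a -> pi_sph v b -> exists c, pi_mul v a b c.
Proof.
move=> ha hb; have [c t] := composite_exists ha hb.
by exists c; apply: pi_mul_composite t (pi_eq_refl (composite_sph ha hb t)).
Qed.

Lemma pi_mul_congr n (a b c a' b' c' : K n.+1) : pi_mul v a b c ->
  pi_eq v a a' -> pi_eq v b b' -> pi_eq v c c' -> pi_mul v a' b' c'.
Proof.
move=> /pi_mulE [ha hb [p tp ep]] ea eb ec.
have /pi_eqE [_ ha' _] := ea; have /pi_eqE [_ hb' _] := eb.
have [r tr] := composite_exists ha' hb; have [q tq] := composite_exists ha' hb'.
apply: (pi_mul_composite ha' hb' tq).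
apply: pi_eq_trans (pi_eq_sym (pi_eq_composite_r ha' tr tq eb)) _.
apply: pi_eq_trans (pi_eq_sym (pi_eq_composite_l hb tp tr ea)) _.
exact: pi_eq_trans ep ec.
Qed.

Lemma pi_mul_unique n (a b c c' : K n.+1) :
  pi_mul v a b c -> pi_mul v a b c' -> pi_eq v c c'.
Proof.
move=> /pi_mulE [ha hb [p tp ep]] /pi_mulE [_ _ [p' tp' ep']].
apply: pi_eq_trans (pi_eq_sym ep) _; apply: pi_eq_trans ep'.
exact: pi_eq_composite_l hb tp tp' (pi_eq_refl ha).
Qed.

Lemma pi_mul_assoc n (a b c ab bc abc : K n.+1) :
  pi_mul v a b ab -> pi_mul v ab c abc -> pi_mul v b c bc -> pi_mul v a bc abc.
Proof.
move=> /pi_mulE [ha hb [p1 t1 e1]] /pi_mulE [_ hc [p2 t2 e2]] /pi_mulE [_ _ [p3 t3 e3]].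
have [q tq] := composite_exists (composite_sph ha hb t1) hc.
have /pi_eqE [_ hbc _] := e3.
have [q' tq'] := composite_exists ha hbc.
apply: (pi_mul_composite ha hbc tq').
have eqp2 : pi_eq v q p2 := pi_eq_composite_l hc tq t2 e1.
have eqq' : pi_eq v q q' := pi_eq_composite_r ha (composite_assoc t1 tq t3) tq' e3.
exact: pi_eq_trans (pi_eq_sym eqq') (pi_eq_trans eqp2 e2).
Qed.

Lemma pi_mul_1l n (a : K n.+1) : pi_sph v a -> pi_mul v (cst v n.+1) a a.
Proof.
by move=> ha; apply: pi_mul_composite (@pi_sph_cst n) ha (composite_1l ha) (pi_eq_refl ha).
Qed.

Lemma pi_mul_1r n (a : K n.+1) : pi_sph v a -> pi_mul v a (cst v n.+1) a.
Proof.
by move=> ha; apply: pi_mul_composite ha (@pi_sph_cst n) (composite_1r ha) (pi_eq_refl ha).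
Qed.

Lemma pi_mul_inv n (a : K n.+1) : pi_sph v a ->
  exists b, [/\ pi_sph v b, pi_mul v a b (cst v n.+1) & pi_mul v b a (cst v n.+1)].
Proof.
move=> ha; have he := @pi_sph_cst n.
have [b hb tb] := composite_invr ha; have [b' hb' tb'] := composite_invl ha.
have ebb' : pi_eq v b b'.
  exact: pi_eq_composite_l he (composite_assoc tb' (composite_1l hb) tb)
           (composite_1r hb') (pi_eq_refl hb').
exists b; split=> //; first exact: pi_mul_composite tb (pi_eq_refl he).
have [r tr] := composite_exists hb ha.
apply: (pi_mul_composite hb ha tr).
exact: pi_eq_sym (pi_eq_composite_l ha tb' tr (pi_eq_sym ebb')).
Qed.

Lemma pi_group n :
  is_group_setoid (pi_sph v (n := n)) (pi_eq v (n := n)) (pi_mul v (n := n)) (cst v n.+1).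
Proof.
split.
  split; first exact: pi_eq_refl.
  split; first exact: pi_eq_sym.
  split; first exact: pi_eq_trans.
  by move=> a b [ha [hb _]].
split; first exact: pi_sph_cst.
split; first exact: pi_mul_exists.
split; first by move=> a b c [ha [hb [hc _]]].
split; first exact: pi_mul_congr.
split; first exact: pi_mul_unique.
split; first exact: pi_mul_assoc.
split; first by move=> a ha; split; [exact: pi_mul_1l | exact: pi_mul_1r].
exact: pi_mul_inv.
Qed.

End HomotopyGroup.

Lemma nonsurj_avoids m n (b : Dmap m n) : ~ dsurj b -> exists j : 'I_n.+1, avoids b j.
Proof.
move=> hs; case: (boolP [exists j : 'I_n.+1, [forall k, dapp b k != j]]).
  by move=> /existsP [j /forallP h]; exists j.
move=> /existsPn h; exfalso; apply: hs => j.
by have /forallPn [k] := h j; rewrite negbK => /eqP; exists k.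
Qed.

Lemma avoids_nonsurj m n (b : Dmap m n) j : j <= n -> avoids b j -> ~ dsurj b.
Proof.
move=> hj hb hs; have [k /(congr1 (@nat_of_ord _))] := hs (inord j).
by rewrite inordE ifT //; apply/eqP.
Qed.

Section HomotopyMonoid.
Variables (K : sSet) (v : K 0).

Lemma tau_sph_iff n (x : K n.+1) : tau_sph (X := th0 K) v x <-> pi_sph v x.
Proof.
split=> [h i hi | h m b /nonsurj_avoids [j hj]].
  exact/h/(avoids_nonsurj hi)/delta_avoids.
have hjn : j <= n.+1 by have := ltn_ord j.
by rewrite (sact_avoids x hjn hj) h // sact_cst.
Qed.

Lemma pi_eq_rel_htpy n (a b : K n.+1) : pi_eq v b a ->
  rel_htpy (A := Deltas n.+1) (X := th0 K) (@boundary n.+1) (yon a) (yon b).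
Proof.
move=> /pi_eqE [hb ha [y hy]].
have ta := (tau_sph_iff a).2 ha; have tb := (tau_sph_iff b).2 hb.
have fa : face n.+2 y = a by rewrite hy //; split_ifs.
have fb : face n.+1 y = b by rewrite hy //; split_ifs.
split; first by move=> m c hc; rewrite /yon ta // tb.
exists (fun m p => sact (collapse p.1 p.2) y); split; first split.
- by move=> m l bb [c t] /=; rewrite -sact_comp; congr sact; dmap_ext.
- by move=> m [c t] [[m' [hm _]] _] /=; lia.
split.
  move=> m c /=; rewrite /yon -fa /face -sact_comp; congr sact; dmap_ext.
  by have := ltn_ord (dapp c k); nat_cases.
split.
  move=> m c /=; rewrite /yon -fb /face -sact_comp; congr sact; dmap_ext.
  by have := ltn_ord (dapp c k); nat_cases.
move=> m c t hc /=; rewrite /yon (ta _ _ hc).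
have [j hj] := nonsurj_avoids hc; have hjn : j <= n.+1 by have := ltn_ord j.
have [ej|nj] := eqVneq (nat_of_ord j) n.+1.
  rewrite -(ta _ _ hc) -fa /face -sact_comp; congr sact; dmap_ext.
  by have := hj k; rewrite ej; have := ltn_ord (dapp c k); nat_cases.
have hcollapse : avoids (collapse c t) j.
  by move=> k; rewrite dapp_collapse; have := hj k; move: hjn nj; nat_cases.
rewrite (sact_avoids y _ hcollapse); last lia.
by rewrite hy; [rewrite ifN // ifN ?sact_cst //; lia | lia].
Qed.

(* [(sigma i, dstep (i+1))] is the i-th (n+2)-simplex of the standard triangulation of
   the prism; its faces i and i+1 are the slices [(id, dstep i)] and [(id, dstep (i+1))]
   and all its other faces lie over the boundary. *)
Lemma prism_slice_htpy n (a : K n.+1) (H : smap (sprod (Deltas n.+1) (DeltaT 1)) (th0 K)) i :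
  pi_sph v a -> natural H ->
  (forall m (c : Dmap m n.+1) t, boundary c -> H m (c, t) = yon a c) -> i <= n.+1 ->
  htpy v i (H n.+1 (did n.+1, dstep n.+1 i)) (H n.+1 (did n.+1, dstep n.+1 i.+1)).
Proof.
move=> ha hnat hB hi; exists (H n.+2 (sigma n.+1 i, dstep n.+2 i.+1)) => l hl.
rewrite /face -hnat /= /prod_act /=.
have [->|li] := eqVneq l i.
  have -> : dcomp (sigma n.+1 i) (delta (inord i)) = did n.+1 by dmap_cases.
  by have -> : dcomp (dstep n.+2 i.+1) (delta (inord i)) = dstep n.+1 i by dmap_cases.
have [->|li'] := eqVneq l i.+1.
  have -> : dcomp (sigma n.+1 i) (delta (inord i.+1)) = did n.+1 by dmap_cases.
  have -> : dcomp (dstep n.+2 i.+1) (delta (inord i.+1)) = dstep n.+1 i.+1 by dmap_cases.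
  by split_ifs.
have ns : ~ dsurj (dcomp (sigma n.+1 i) (delta (n := n.+1) (inord l))).
  apply: (@avoids_nonsurj _ _ _ (if l < i then l else l.-1)); first by nat_cases.
  by move=> k; rewrite dapp_comp dapp_sigma dapp_delta bumpE inordE; have := ltn_ord k; nat_cases.
by rewrite hB // /yon ((tau_sph_iff a).2 ha) //; split_ifs.
Qed.

Hypothesis hK : Kan K.

Lemma rel_htpy_pi_eq n (a b : K n.+1) : pi_sph v a -> pi_sph v b ->
  rel_htpy (A := Deltas n.+1) (X := th0 K) (@boundary n.+1) (yon a) (yon b) -> pi_eq v a b.
Proof.
move=> ha hb [_ [H [[hnat _] [h0 [h1 hB]]]]].
pose cc i := H n.+1 (did n.+1, dstep n.+1 i).
have cc_sph i : pi_sph v (cc i).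
  move=> l hl; rewrite /face /cc -hnat /= /prod_act /=.
  have -> : dcomp (did n.+1) (delta (n := n) (inord l)) = delta (inord l) by dmap_ext.
  by rewrite hB; [apply: ha | apply/(avoids_nonsurj hl)/delta_avoids].
have cc0 : cc 0 = b.
  rewrite /cc; have -> : dstep n.+1 0 = dconst n.+1 ord_max by dmap_ext; nat_cases.
  by rewrite h1 /yon sact_id.
have ccN : cc n.+2 = a.
  rewrite /cc; have -> : dstep n.+1 n.+2 = dconst n.+1 ord0 by dmap_cases.
  by rewrite h0 /yon sact_id.
have chain i : i <= n.+2 -> pi_eq v b (cc i).
  elim: i => [_|i IH hi]; first by rewrite cc0; apply: pi_eq_refl.
  apply: (pi_eq_trans hK (IH (ltnW hi))); apply/pi_eqE; split; try exact: cc_sph.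
  exact: (htpy_top hK (cc_sph i.+1) hi (prism_slice_htpy ha hnat hB hi)).
by rewrite -{1}ccN; apply: (pi_eq_sym hK (chain _ (leqnn _))).
Qed.

Lemma tau_eq_iff n (a b : K n.+1) : tau_eq (X := th0 K) v a b <-> pi_eq v a b.
Proof.
split=> [[/tau_sph_iff ha [/tau_sph_iff hb h]] | e]; first exact: rel_htpy_pi_eq.
have /pi_eqE [ha hb _] := e.
split; first exact/tau_sph_iff.
split; first exact/tau_sph_iff.
exact/pi_eq_rel_htpy/(pi_eq_sym hK e).
Qed.

Lemma yon_strat_horn n (z : K n.+2) :
  strat_map (A := DeltaH n.+2 n.+1) (X := th0 K) (yon z).
Proof.
split=> [m l b x | m a [[m' [hm _]] | hsurj]] /=; [by rewrite /yon sact_comp | lia |].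
case: m a hsurj => // a hsurj; exfalso.
have [i1 e1] := hsurj (inord n) ltac:(rewrite inordE; case: ifP; lia).
have [i2 e2] := hsurj (inord n.+1) ltac:(rewrite inordE; case: ifP; lia).
have ei : i1 = i2 by apply: ord_inj; have := ltn_ord i1; have := ltn_ord i2; lia.
by move: e2; rewrite -ei e1 => /(congr1 (@nat_of_ord _)); rewrite !inordE; nat_cases.
Qed.

Lemma tau_mul_iff n (a b c : K n.+1) : tau_mul (X := th0 K) v a b c <-> pi_mul v a b c.
Proof.
split=> [[/tau_sph_iff ha [/tau_sph_iff hb [/tau_sph_iff hc [z [_ [z1 [z2 [z3 z4]]]]]]]]|].
  split=> //; split=> //; split=> //; exists z; split=> //; split=> //; split.
    move=> i hi; apply: z3; first lia.
    by rewrite !inE; apply/negP; case/or3P => /eqP; lia.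
  exact/tau_eq_iff.
move=> [ha [hb [hc [z [z1 [z2 [z3 z4]]]]]]].
split; first exact/tau_sph_iff.
split; first exact/tau_sph_iff.
split; first exact/tau_sph_iff.
exists z; split; first exact: yon_strat_horn.
split=> //; split=> //; split; last exact/tau_eq_iff.
move=> i hi; rewrite !inE => /norP [/eqP ? /norP [/eqP ? /eqP ?]].
apply: z3; lia.
Qed.

End HomotopyMonoid.

(* The paper's dimension N >= 1 is written here as n.+1. *)
Theorem mainTheorem5 (K : sSet) (v : K 0) (n : nat) :
  Kan K ->
  is_group_setoid (tau_sph (X := th0 K) v (n := n)) (tau_eq (X := th0 K) v (n := n))
                  (tau_mul (X := th0 K) v (n := n)) (cst v n.+1) /\
  (forall a : K n.+1, tau_sph (X := th0 K) v a <-> pi_sph v a) /\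
  (forall a b : K n.+1, tau_eq (X := th0 K) v a b <-> pi_eq v a b) /\
  (forall a b c : K n.+1, tau_mul (X := th0 K) v a b c <-> pi_mul v a b c).
Proof.
move=> hK.
have e_sph : tau_sph (X := th0 K) v (n := n) = pi_sph v (n := n).
  apply: functional_extensionality => a.
  by apply: propositional_extensionality; apply: tau_sph_iff.
have e_eq : tau_eq (X := th0 K) v (n := n) = pi_eq v (n := n).
  do 2 apply: functional_extensionality => ?.
  by apply: propositional_extensionality; apply: tau_eq_iff.
have e_mul : tau_mul (X := th0 K) v (n := n) = pi_mul v (n := n).
  do 3 apply: functional_extensionality => ?.
  by apply: propositional_extensionality; apply: tau_mul_iff.
split; first by rewrite e_sph e_eq e_mul; apply: pi_group.
split; first exact: tau_sph_iff.
split; first exact: tau_eq_iff.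
exact: tau_mul_iff.
Qed.
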